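(* Let $p$ be an odd prime, $G=\mathrm{PGL}_n(\mathbb{C})$ where $p^s\mid n$, $p^{s+1}\nmid n$, $s\ge1$. Let $\bar A$ be a toral elementary abelian $p$-subgroup of $G$ of rank $r$ with $1\le r\le s$. If $C_G(\bar A)$ is connected, then $\bar A$ contains an element of order $p$ not $G$-conjugate to $e_{n/p}$.
   Context: Toral: contained in a maximal torus. With $\alpha=e^{2\pi i/p}$ and $n=pk$, $e_{n/p}$ is the image in $G$ of $\mathrm{diag}(I_k,\alpha I_k,\dots,\alpha^{p-1}I_k)$. *)

From HB Require Import structures.
From mathcomp Require Import all_boot all_order all_algebra.
From mathcomp Require Import all_classical all_reals all_analysis.
From mathcomp Require Import complex.
Import numFieldTopology.Exports numFieldNormedType.Exports.
Import Order.TTheory GRing.Theory Num.Theory.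

Set Implicit Arguments.
Unset Strict Implicit.
Unset Printing Implicit Defensive.

Local Open Scope classical_set_scope.
Local Open Scope ring_scope.
Local Open Scope quotient_scope.

(* As a numClosedFieldType it carries its Euclidean (modulus) topology;
   matrices 'M[CC R]_n carry the product (Euclidean) topology. *)
Definition CC (R : realType) : numClosedFieldType := R[i].

Section PGL.
Variables (R : realType) (n : nat).
Local Notation C := (CC R).
Local Notation M := 'M[C]_n.

Definition projrel : rel M :=
  fun A B => `[< exists2 c : C, c != 0 & B = c *: A >].

Lemma projrel_refl : reflexive projrel.
Proof. by move=> A; apply/asboolP; exists 1; [exact: oner_neq0 | rewrite scale1r]. Qed.

Lemma projrel_sym : symmetric projrel.
Proof.
suff H : forall A B, projrel A B -> projrel B A.
  by move=> A B; apply/idP/idP => /H.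
move=> A B /asboolP [c c0 ->]; apply/asboolP; exists c^-1.
  by rewrite invr_eq0.
by rewrite scalerA mulVf // scale1r.
Qed.

Lemma projrel_trans : transitive projrel.
Proof.
move=> B A D /asboolP [c c0 ->] /asboolP [d d0 ->]; apply/asboolP.
by exists (d * c); [rewrite mulf_neq0 | rewrite scalerA].
Qed.

Canonical projrel_equiv :=
  EquivRel projrel projrel_refl projrel_sym projrel_trans.

(* M_n(C) modulo nonzero scalars, with the quotient topology.  PGL_n(C) is the
   (open, saturated) subset of classes of invertible matrices, see [PGL]. *)
Definition PGLq : topologicalType := quotient_topology {eq_quot projrel}.

Definition pgl_pi (A : M) : PGLq := \pi_PGLq A.

Definition PGL : set PGLq := [set x | repr x \in unitmx].
Definition pgl_one : PGLq := pgl_pi 1%:M.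
Definition pgl_mul (x y : PGLq) : PGLq := pgl_pi (repr x *m repr y).
Definition pgl_inv (x : PGLq) : PGLq := pgl_pi (invmx (repr x)).
Fixpoint pgl_exp (x : PGLq) (k : nat) : PGLq :=
  if k is k'.+1 then pgl_mul x (pgl_exp x k') else pgl_one.

Definition pgl_has_order (x : PGLq) (k : nat) : Prop :=
  [/\ (0 < k)%N, pgl_exp x k = pgl_one &
      forall j : nat, (0 < j < k)%N -> pgl_exp x j <> pgl_one].

Definition pgl_conjugate (x y : PGLq) : Prop :=
  exists2 g, PGL g & pgl_mul (pgl_mul g x) (pgl_inv g) = y.

Definition elem_abelian_psubgroup (p r : nat) (A : set PGLq) : Prop :=
  [/\ A `<=` PGL, A pgl_one,
      (forall x y, A x -> A y -> A (pgl_mul x y)) &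
      (forall x, A x -> A (pgl_inv x))] /\
  [/\ (forall x y, A x -> A y -> pgl_mul x y = pgl_mul y x),
      (forall x, A x -> pgl_exp x p = pgl_one) &
      (A #= [set: 'I_(p ^ r)])%card].

(* The maximal tori of PGL_n(C) are the images of the maximal tori of GL_n(C),
   i.e. the conjugates g T g^-1 of the image T of the diagonal torus. *)
Definition max_torus (g : M) : set PGLq :=
  [set pgl_pi (g *m D *m invmx g) | D in [set D : M | is_diag_mx D /\ D \in unitmx]].

Definition toral (A : set PGLq) : Prop :=
  exists2 g : M, g \in unitmx & A `<=` max_torus g.

Definition centralizer (A : set PGLq) : set PGLq :=
  [set g | PGL g /\ forall x, A x -> pgl_mul g x = pgl_mul x g].

Definition alpha (p : nat) : C :=
  Complex (cos (2 * pi / p%:R)) (sin (2 * pi / p%:R)).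

(* diag(I_k, alpha I_k, ..., alpha^{p-1} I_k), k = n/p: entry j lies in block j %/ k *)
Definition e_mat (p : nat) : M :=
  diag_mx (\row_(j < n) alpha p ^+ (j %/ (n %/ p))%N).

Definition e_elt (p : nat) : PGLq := pgl_pi (e_mat p).

End PGL.

From HB Require Import structures.
From mathcomp Require Import all_boot all_order all_algebra.
From mathcomp Require Import all_classical all_reals all_analysis.
From mathcomp Require Import complex perm finmap.
Import numFieldTopology.Exports numFieldNormedType.Exports.
Import Order.TTheory GRing.Theory Num.Theory.

(* If every element of order p of A were conjugate to e_{n/p}, every nontrivial
   element of the finite toral group A would have a traceless representative.
   Diagonalise A simultaneously by g and consider the weights, i.e. the characters
   x |-> d_j(x) / d_i(x) of A given by ratios of eigenvalues.  Counting
   \sum_(x in A) \sum_j w_ji(x) / psi(x) in two ways (vanishing traces against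
   orthogonality of characters) shows that multiplying the weights by any weight
   psi preserves multiplicities; so psi is realised by a permutation of the
   coordinates, whose conjugate G by g satisfies G x G^-1 = psi(x) x for x in A
   and therefore lies in C_G(A).  But for y in C_G(A) the twist y x y^-1 x^-1 is
   a p-th root of unity, and the locus where it equals 1 is clopen in C_G(A); if
   C_G(A) is connected, it is everything, contradicting psi(x) <> 1 for a
   nontrivial weight psi. *)

Set Implicit Arguments.
Unset Strict Implicit.
Unset Printing Implicit Defensive.

Local Open Scope classical_set_scope.
Local Open Scope ring_scope.

Section PGLGroup.
Variables (R : realType) (n : nat).
Local Notation C := (CC R).
Local Notation M := 'M[C]_n.
Local Notation PG := (PGLq R n).
Local Notation one := (pgl_one R n).

Lemma pgl_piP (A B : M) :
  pgl_pi A = pgl_pi B <-> exists2 c : C, c != 0 & B = c *: A.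
Proof. by split=> [/eqmodP/asboolP // | c_rel]; apply/eqmodP/asboolP. Qed.

Lemma repr_pglK (x : PG) : pgl_pi (repr x) = x.
Proof. exact: reprK. Qed.

Lemma repr_pgl_pi (A : M) : exists2 c : C, c != 0 & repr (pgl_pi A) = c *: A.
Proof. by apply/pgl_piP; rewrite repr_pglK. Qed.

Lemma pgl_piZ (c : C) (A : M) : c != 0 -> pgl_pi (c *: A) = pgl_pi A.
Proof.
move=> c0; apply/pgl_piP; exists c^-1; first by rewrite invr_eq0.
by rewrite scalerA mulVf // scale1r.
Qed.

Lemma pgl_mul_pi (A B : M) : pgl_mul (pgl_pi A) (pgl_pi B) = pgl_pi (A *m B).
Proof.
rewrite /pgl_mul; have [c c0 ->] := repr_pgl_pi A; have [d d0 ->] := repr_pgl_pi B.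
by rewrite -scalemxAr -scalemxAl scalerA pgl_piZ // mulf_neq0.
Qed.

Lemma PGL_pi (B : M) : B \in unitmx -> PGL (pgl_pi B).
Proof.
by move=> Bu; rewrite /PGL /=; have [c c0 ->] := repr_pgl_pi B; rewrite unitmxZ ?unitfE.
Qed.

Lemma pgl_mulA : associative (@pgl_mul R n).
Proof.
move=> x y z; rewrite -[x]repr_pglK -[y]repr_pglK -[z]repr_pglK.
by rewrite !pgl_mul_pi mulmxA.
Qed.

Lemma pgl_mul1x (x : PG) : pgl_mul one x = x.
Proof. by rewrite -[x]repr_pglK pgl_mul_pi mul1mx. Qed.

Lemma pgl_mulx1 (x : PG) : pgl_mul x one = x.
Proof. by rewrite -[x]repr_pglK pgl_mul_pi mulmx1. Qed.

Lemma pgl_mulxV (x : PG) : PGL x -> pgl_mul x (pgl_inv x) = one.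
Proof. by move=> xu; rewrite /pgl_inv -{1}[x]repr_pglK pgl_mul_pi mulmxV. Qed.

Lemma pgl_mulVx (x : PG) : PGL x -> pgl_mul (pgl_inv x) x = one.
Proof. by move=> xu; rewrite /pgl_inv -{2}[x]repr_pglK pgl_mul_pi mulVmx. Qed.

Lemma pgl_mulIx (y : PG) : PGL y -> injective (fun x => pgl_mul x y).
Proof.
move=> yu a b /(congr1 (fun x => pgl_mul x (pgl_inv y))).
by rewrite -!pgl_mulA pgl_mulxV // !pgl_mulx1.
Qed.

Lemma pgl_expD (x : PG) (a b : nat) :
  pgl_exp x (a + b) = pgl_mul (pgl_exp x a) (pgl_exp x b).
Proof. by elim: a => [|a IH] /=; rewrite ?pgl_mul1x // IH pgl_mulA. Qed.

Lemma pgl_expM (x : PG) (a b : nat) : pgl_exp x (a * b) = pgl_exp (pgl_exp x a) b.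
Proof. by elim: b => [|b IH]; rewrite ?muln0 // mulnS pgl_expD IH. Qed.

Lemma pgl_exp1n (k : nat) : pgl_exp one k = one.
Proof. by elim: k => //= k ->; rewrite pgl_mul1x. Qed.

Lemma pgl_has_order_prime (p : nat) (x : PG) :
  prime p -> pgl_exp x p = one -> x <> one -> pgl_has_order x p.
Proof.
move=> pp xp x1; split=> [||j /andP[j0 jp] xj]; [exact: prime_gt0 | exact: xp |].
have pj : coprime p j by rewrite prime_coprime ?gtnNdvd.
apply: x1; have [a _] := Bezoutl j (prime_gt0 pp); rewrite (eqP pj) => /dvdnP[b Eb].
have -> : x = pgl_exp x (1 + a * j).
  by rewrite pgl_expD mulnC pgl_expM xj pgl_exp1n /= !pgl_mulx1.
by rewrite Eb mulnC pgl_expM xp pgl_exp1n.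
Qed.

End PGLGroup.

Lemma sumr_nat_divn (V : nmodType) (f : nat -> V) (k m : nat) : (0 < m)%N ->
  \sum_(0 <= j < k * m) f (j %/ m)%N = (\sum_(0 <= i < k) f i) *+ m.
Proof.
move=> m0; rewrite big_nat_mul -sumrMnl; apply: eq_bigr => i _.
rewrite (@eq_big_nat _ _ _ _ _ _ (fun=> f i)) ?sumr_const_nat ?mulSn ?addnK //.
move=> j /andP[ij ji]; congr f; apply/eqP; rewrite eqn_leq.
by rewrite -ltnS ltn_divLR // leq_divRL // ij ji.
Qed.

Section RootOfUnity.
Variables (R : realType) (p : nat).
Hypothesis p_gt2 : (2 < p)%N.
Local Notation C := (CC R).

Lemma alphaX (k : nat) :
  alpha R p ^+ k = Complex (cos ((2 * pi / p%:R) *+ k)) (sin ((2 * pi / p%:R) *+ k)).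
Proof.
elim: k => [|k IH]; first by rewrite expr0 !mulr0n cos0 sin0.
rewrite exprS IH /alpha; set t := 2 * pi / p%:R.
by rewrite (mulrS t) cosD sinD (addrC (sin t * _)).
Qed.

Lemma alpha_unity_root : alpha R p ^+ p = 1.
Proof.
rewrite alphaX -mulr_natr mulfVK ?pnatr_eq0 -?lt0n ?(ltn_trans _ p_gt2) //.
by rewrite mulr_natl cos2pi sin2pi.
Qed.

Lemma alpha_neq1 : alpha R p != 1.
Proof.
have p_gt0 : (0 < p)%N by rewrite (ltn_trans _ p_gt2).
apply/eqP => /(congr1 (@complex.Im R)) /= sin0.
have : 0 < sin (2 * pi / p%:R) :> R.
  apply: sin_gt0_pi; rewrite divr_gt0 ?mulr_gt0 ?pi_gt0 ?ltr0n //=.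
  rewrite ltr_pdivrMr ?ltr0n // mulrC ltr_pM2l ?pi_gt0 //.
  by rewrite ltr_nat.
by rewrite sin0 ltxx.
Qed.

Lemma alpha_prim_root : prime p -> p.-primitive_root (alpha R p).
Proof.
move=> pp; have [m pm mp] := prim_order_exists (prime_gt0 pp) alpha_unity_root.
have [m1|m1] := eqVneq m 1%N.
  move: pm; rewrite m1 => /prim_expr_order; rewrite expr1 => alpha1.
  by move: alpha_neq1; rewrite alpha1 eqxx.
by move: pm; rewrite (prime_nt_dvdP pp m1 mp).
Qed.

End RootOfUnity.

Section ConjugatesOfE.
Variables (R : realType) (n p : nat).
Hypotheses (pp : prime p) (p_gt2 : (2 < p)%N) (p_dvd_n : (p %| n)%N) (n_gt0 : (0 < n)%N).

Lemma mxtrace_e_mat : \tr (e_mat R n p) = 0.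
Proof.
have m_gt0 : (0 < n %/ p)%N by rewrite divn_gt0 ?prime_gt0 // dvdn_leq.
rewrite /e_mat mxtrace_diag; under eq_bigr do rewrite mxE.
rewrite -(big_mkord xpredT (fun j => alpha R p ^+ (j %/ (n %/ p)))).
set m := (n %/ p)%N; have -> : n = (p * m)%N by rewrite mulnC divnK.
rewrite sumr_nat_divn // big_mkord.
have /eqP := subrX1 (alpha R p) p.
rewrite alpha_unity_root // subrr eq_sym mulf_eq0 subr_eq0 (negbTE (alpha_neq1 _ p_gt2)).
by move=> /eqP ->; rewrite mul0rn.
Qed.

Lemma pgl_conjugate_e_mxtrace (x : PGLq R n) :
  pgl_conjugate x (e_elt R n p) -> \tr (repr x) = 0.
Proof.
move=> [g gu]; rewrite [pgl_mul g x]/pgl_mul /pgl_inv pgl_mul_pi /e_elt.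
case/pgl_piP=> c c0 /(congr1 mxtrace); rewrite mxtrace_e_mat mxtraceZ.
rewrite mxtrace_mulC mulmxA mulVmx // mul1mx => /esym/eqP.
by rewrite mulf_eq0 (negbTE c0) => /eqP.
Qed.

End ConjugatesOfE.

Lemma fsumr1 (V : pzSemiRingType) (T : choiceType) (A : set T) :
  finite_set A -> \sum_(x \in A) (1 : V) = #|` fset_set A|%:R.
Proof. by move=> A_fin; rewrite fsbig_finite // -sum1_size natr_sum. Qed.

Section Characters.
Variables (R : realType) (n : nat) (A : set (PGLq R n)).
Local Notation C := (CC R).
Local Notation PG := (PGLq R n).

Definition pgl_character (chi : PG -> C) : Prop :=
  (forall x, A x -> chi x != 0) /\
  (forall x y, A x -> A y -> chi (pgl_mul x y) = chi x * chi y).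

Hypotheses (A_PGL : A `<=` @PGL R n) (A_mul : forall x y, A x -> A y -> A (pgl_mul x y))
  (A_inv : forall x, A x -> A (pgl_inv x)).

Lemma fsum_character_eq0 (chi : PG -> C) (y : PG) :
  pgl_character chi -> A y -> chi y != 1 -> \sum_(x \in A) chi x = 0.
Proof.
move=> [_ chiM] Ay chiy1.
have right_mul_bij : set_bij A A (fun x => pgl_mul x y).
  split=> [x Ax | x z _ _ | z Az].
  - exact: A_mul.
  - exact/(pgl_mulIx (A_PGL Ay)).
  - exists (pgl_mul z (pgl_inv y)); first exact: A_mul Az (A_inv Ay).
    by rewrite -pgl_mulA (pgl_mulVx (A_PGL Ay)) pgl_mulx1.
have : \sum_(x \in A) chi x = chi y * \sum_(x \in A) chi x.
  rewrite {1}(reindex_fsbig _ _ _ _ right_mul_bij) mulr_fsumr.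
  by apply: eq_fsbigr => x /set_mem Ax; rewrite chiM // mulrC.
move/eqP; rewrite -subr_eq0 -{1}[\sum_(x \in A) _]mul1r -mulrBl mulf_eq0 subr_eq0.
by rewrite eq_sym (negbTE chiy1) => /eqP.
Qed.

End Characters.

Section MaximalTorus.
Variables (R : realType) (n : nat) (g : 'M[CC R]_n).
Hypothesis g_unit : g \in unitmx.
Local Notation C := (CC R).
Local Notation PG := (PGLq R n).
Local Notation one := (pgl_one R n).

Definition teig (x : PG) (i : 'I_n) : C := (invmx g *m repr x *m g) i i.

(* Unlike the eigenvalues, their ratios do not depend on the representative of x. *)
Definition weight (x : PG) (j i : 'I_n) : C := teig x j / teig x i.

Lemma max_torusP (x : PG) : max_torus g x ->
  exists2 d : 'rV[C]_n, invmx g *m repr x *m g = diag_mx d & forall i, d 0 i != 0.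
Proof.
case=> D [/diag_mxP[d ->] Du] <-.
have [c c0 ->] := repr_pgl_pi (g *m diag_mx d *m invmx g); exists (c *: d).
  rewrite -scalemxAr -scalemxAl !mulmxA mulVmx // mul1mx -mulmxA mulVmx //.
  by rewrite mulmx1 linearZ.
move=> i; rewrite mxE mulf_neq0 //; move: Du; rewrite unitmxE det_diag unitfE.
by apply: contra => /eqP di0; rewrite (bigD1 i) //= di0 mul0r.
Qed.

Lemma teig_diag (x : PG) (d : 'rV[C]_n) (i : 'I_n) :
  invmx g *m repr x *m g = diag_mx d -> teig x i = d 0 i.
Proof. by rewrite /teig => ->; rewrite mxE eqxx mulr1n. Qed.

Lemma teig_neq0 (x : PG) (i : 'I_n) : max_torus g x -> teig x i != 0.
Proof. by case/max_torusP=> d /teig_diag ->. Qed.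

Lemma teigM (x y : PG) : max_torus g x -> max_torus g y ->
  exists2 l : C, l != 0 & forall i, teig (pgl_mul x y) i = l * (teig x i * teig y i).
Proof.
move=> /max_torusP[dx Dx _] /max_torusP[dy Dy _].
have [l l0 E] := repr_pgl_pi (repr x *m repr y); exists l => // i.
have conjM : invmx g *m (repr x *m repr y) *m g =
    (invmx g *m repr x *m g) *m (invmx g *m repr y *m g).
  by rewrite !mulmxA -[invmx g *m _ *m g *m invmx g]mulmxA mulmxV ?mulmx1.
rewrite /teig /pgl_mul E -scalemxAr -scalemxAl conjM Dx Dy mul_diag_mx.
by rewrite !mxE !eqxx !mulr1n.
Qed.

Lemma weightM (x y : PG) (j i : 'I_n) : max_torus g x -> max_torus g y ->
  weight (pgl_mul x y) j i = weight x j i * weight y j i.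
Proof.
move=> Tx Ty; have [l l0 E] := teigM Tx Ty.
by rewrite /weight !E invfM mulrACA mulfV // mul1r invfM mulrACA.
Qed.

Lemma weight_one (j i : 'I_n) : weight one j i = 1.
Proof.
have [c c0 E] := repr_pgl_pi (1%:M : 'M[C]_n).
rewrite /weight /teig /pgl_one E -scalemxAr -scalemxAl mulmx1 mulVmx //.
by rewrite !mxE !eqxx !mulr1n mulr1 mulfV.
Qed.

Lemma sum_teig (x : PG) : \sum_i teig x i = \tr (repr x).
Proof.
have -> : \sum_i teig x i = \tr (invmx g *m repr x *m g) by [].
by rewrite mxtrace_mulC mulmxA mulmxV // mul1mx.
Qed.

Lemma weights1_pgl_one (x : PG) (i0 : 'I_n) : max_torus g x ->
  (forall i, weight x i i0 = 1) -> x = one.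
Proof.
move=> /max_torusP[d Dx d0] w1.
have diagE : diag_mx d = (d 0 i0)%:M.
  apply/matrixP=> i j; rewrite !mxE -[d 0 i](divfK (d0 i0)).
  by move: (w1 i); rewrite /weight !(teig_diag _ Dx) => ->; rewrite mul1r.
have : repr x = g *m (invmx g *m repr x *m g) *m invmx g.
  by rewrite !mulmxA mulmxV // mul1mx -mulmxA mulmxV // mulmx1.
rewrite Dx diagE mul_mx_scalar -scalemxAl mulmxV // => Ex.
by rewrite -[x]repr_pglK Ex pgl_piZ.
Qed.

Lemma weight_eq1P (x : PG) (j i : 'I_n) : max_torus g x ->
  weight x j i = 1 <-> teig x j = teig x i.
Proof.
move=> Tx; split=> [w1 | eq_ji]; last by rewrite /weight eq_ji divff ?teig_neq0.
by rewrite -[teig x j](divfK (teig_neq0 i Tx)) [_ / _]w1 mul1r.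
Qed.

Lemma perm_mx_conj_scommute (x : PG) (s : 'S_n) (c : C) : max_torus g x ->
  (forall i, weight x (s i) i = c) ->
  let G := g *m perm_mx s *m invmx g in G *m repr x = c *: (repr x *m G).
Proof.
move=> /max_torusP[d Dx d0] ws G.
have PD : perm_mx s *m diag_mx d = c *: (diag_mx d *m perm_mx s).
  apply/matrixP=> i j; rewrite mul_mx_diag mul_diag_mx !mxE.
  have := ws i; rewrite /weight !(teig_diag _ Dx) => <-.
  by case: eqP => [<-|_]; rewrite ?mulr1 ?mulr0 ?mul0r ?mul1r ?divfK.
have -> : repr x = g *m diag_mx d *m invmx g.
  by rewrite -Dx !mulmxA mulmxV // mul1mx -mulmxA mulmxV // mulmx1.
rewrite /G !mulmxA -[_ *m invmx g *m g]mulmxA mulVmx // mulmx1.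
rewrite -[g *m perm_mx s *m diag_mx d]mulmxA PD -scalemxAr -!scalemxAl; congr (_ *: _).
by rewrite -[g *m diag_mx d *m invmx g *m g]mulmxA mulVmx // mulmx1 !mulmxA.
Qed.

End MaximalTorus.

Lemma exists_perm_in_blocks (T : finType) (P E : T -> {set T}) :
  (forall i, i \in E i) ->
  (forall i j, j \in E i -> E j = E i /\ P j = P i) ->
  (forall i i' j, j \in P i -> j \in P i' -> i' \in E i) ->
  (forall i, #|P i| = #|E i|) ->
  exists s : {perm T}, forall i, s i \in P i.
Proof.
move=> E_refl E_class P_disj cardPE.
(* s0 sends the k-th element of the class E i to the k-th element of P i. *)
pose s0 i := nth i (enum (P i)) (index i (enum (E i))).
have index_lt i : (index i (enum (E i)) < size (enum (P i)))%N.
  by rewrite -cardE cardPE cardE index_mem mem_enum.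
have s0P i : s0 i \in P i by rewrite -mem_enum mem_nth.
have s0_inj : injective s0.
  move=> i i' eq_s; have := P_disj i i' _ (s0P i); rewrite eq_s => /(_ (s0P i')) i'Ei.
  have [Ei' Pi'] := E_class i i' i'Ei.
  have := index_lt i'; rewrite Ei' Pi' => lt'.
  move: eq_s; rewrite /s0 Ei' Pi' (set_nth_default i i' lt') => /eqP.
  rewrite nth_uniq ?enum_uniq // => /eqP eq_idx.
  have [iE i'E] : i \in enum (E i) /\ i' \in enum (E i) by rewrite !mem_enum.
  by rewrite -(nth_index i iE) eq_idx nth_index.
by exists (perm s0_inj) => i; rewrite permE.
Qed.

Section WeightSets.
Variables (R : realType) (n : nat) (g : 'M[CC R]_n) (A : set (PGLq R n)).
Local Notation C := (CC R).
Local Notation PG := (PGLq R n).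
Local Notation one := (pgl_one R n).
Hypotheses (g_unit : g \in unitmx) (A_torus : A `<=` max_torus g).
Hypotheses (A_PGL : A `<=` @PGL R n) (A_one : A one)
  (A_mul : forall x y, A x -> A y -> A (pgl_mul x y))
  (A_inv : forall x, A x -> A (pgl_inv x)) (A_fin : finite_set A).
Hypothesis A_traceless : forall x, A x -> x <> one -> \tr (repr x) = 0.

Lemma weight_character (j i : 'I_n) : pgl_character A (fun x => weight g x j i).
Proof.
split=> [x /A_torus Tx | x y /A_torus Tx /A_torus Ty]; last exact: weightM.
by rewrite mulf_neq0 ?invr_eq0 ?teig_neq0.
Qed.

Definition weight_set (psi : PG -> C) (i : 'I_n) : {set 'I_n} :=
  [set j | `[< forall x, A x -> weight g x j i = psi x >]].

Lemma card_weight_set (psi : PG -> C) (i : 'I_n) : pgl_character A psi ->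
  (#|weight_set psi i| * #|` fset_set A|)%N = n.
Proof.
(* Double counting: summed over x first, only x = one survives (the other elements
   are traceless); summed over j first, the character sums vanish off the weight set. *)
move=> [psi0 psiM]; have psi1 : psi one = 1.
  by apply: (mulfI (psi0 _ A_one)); rewrite -psiM // pgl_mul1x mulr1.
pose T x j := weight g x j i / psi x.
have T_char j : pgl_character A (T^~ j).
  have [w0 wM] := weight_character j i.
  split=> [x Ax | x y Ax Ay]; first by rewrite mulf_neq0 ?invr_eq0 ?w0 ?psi0.
  by rewrite /T wM // psiM // invfM mulrACA.
have sum_over_A : \sum_(x \in A) \sum_j T x j = n%:R.
  rewrite (fsbigD1 one) // fsbig1 ?addr0 => [|x [Ax x1]].
    under eq_bigr do rewrite /T weight_one // psi1 divr1.
    by rewrite sumr_const card_ord; apply: addr0.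
  by rewrite /T /weight -!mulr_suml sum_teig // (A_traceless Ax x1) !mul0r.
have sum_over_weights :
    \sum_j \sum_(x \in A) T x j = (#|weight_set psi i| * #|` fset_set A|)%:R.
  have sum_in_set j : j \in weight_set psi i -> \sum_(x \in A) T x j = #|` fset_set A|%:R.
    rewrite inE => /asboolP wj; rewrite -fsumr1 //; apply: eq_fsbigr => x /set_mem Ax.
    by rewrite /T wj // divff ?psi0.
  rewrite (bigID (mem (weight_set psi i))) /= (eq_bigr _ sum_in_set) [X in _ + X]big1 => [|j].
    by rewrite sumr_const addr0 natrM mulr_natl.
  rewrite inE => /asboolPn /existsNP[x /not_implyP[Ax wx]].
  apply: (fsum_character_eq0 A_PGL A_mul A_inv (T_char j) Ax).
  by apply/eqP => /(canRL (divfK (psi0 _ Ax))); rewrite mul1r.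
apply/eqP; rewrite -(eqr_nat C) -sum_over_weights -sum_over_A.
by rewrite fsbig_finite // exchange_big; apply/eqP/eq_bigr => j _; rewrite fsbig_finite.
Qed.

Lemma mem_weight_set1 (i j : 'I_n) :
  j \in weight_set (fun=> 1) i <-> forall x, A x -> teig g x j = teig g x i.
Proof.
rewrite inE; split=> [/asboolP w1 x Ax | teig_eq].
  exact/(weight_eq1P g_unit _ _ (A_torus Ax))/w1.
by apply/asboolP => x Ax; apply/(weight_eq1P g_unit _ _ (A_torus Ax))/teig_eq.
Qed.

Lemma weight_set_teig_eq (psi : PG -> C) (i i' : 'I_n) :
  (forall x, A x -> teig g x i = teig g x i') -> weight_set psi i = weight_set psi i'.
Proof.
move=> teig_eq; apply/setP=> j; rewrite !inE /weight.
by apply/asboolP/asboolP=> w x Ax; rewrite -w // teig_eq.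
Qed.

Lemma exists_weight_perm (psi : PG -> C) : pgl_character A psi ->
  exists s : 'S_n, forall i x, A x -> weight g x (s i) i = psi x.
Proof.
move=> psi_char.
have one_char : pgl_character A (fun=> 1) by split=> *; rewrite ?oner_neq0 ?mulr1.
have A_gt0 : (0 < #|` fset_set A|)%N.
  by rewrite cardfs_gt0; apply/fset0Pn; exists one; rewrite in_fset_set // mem_set.
have [s s_weight] : exists s : 'S_n, forall i, s i \in weight_set psi i.
  apply: (@exists_perm_in_blocks _ _ (weight_set (fun=> 1))).
  - by move=> i; apply/mem_weight_set1.
  - move=> i j /(mem_weight_set1 i j) teig_eq.
    by split; apply: weight_set_teig_eq.
  - move=> i i' j ji ji'; apply/mem_weight_set1 => x Ax.
    move: ji ji'; rewrite !inE => /asboolP wi /asboolP wi'.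
    apply/invr_inj/(mulfI (teig_neq0 g_unit j (A_torus Ax))).
    by rewrite -[LHS]/(weight g x j i') -[RHS]/(weight g x j i) wi // wi'.
  - by move=> i; apply/eqP; rewrite -(eqn_pmul2r A_gt0) !card_weight_set.
by exists s => i x Ax; move: (s_weight i); rewrite inE => /asboolP ->.
Qed.

End WeightSets.

Section TwistedCentralizer.
Variables (R : realType) (n : nat).
Local Notation C := (CC R).
Local Notation M := 'M[C]_n.
Local Notation PG := (PGLq R n).

Definition twisted_cent (X : M) (c : C) : set PG :=
  [set y | repr y *m X = c *: (X *m repr y)].

Lemma twisted_cent_pi (X G : M) (c : C) :
  twisted_cent X c (pgl_pi G) <-> G *m X = c *: (X *m G).
Proof.
rewrite /twisted_cent /=; have [d d0 ->] := repr_pgl_pi G.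
rewrite -scalemxAl -scalemxAr scalerA mulrC -scalerA.
split=> [/(congr1 (fun B => d^-1 *: B)) | -> //].
by rewrite !scalerA mulVf // mulKf // scale1r.
Qed.

Lemma twisted_coef_continuous (X : M) (c : C) (i j : 'I_n) :
  continuous (fun G : M => (G *m X - c *: (X *m G)) i j).
Proof.
have -> : (fun G : M => (G *m X - c *: (X *m G)) i j) =
    (fun G => \sum_k (G i k * X k j - c * (X i k * G k j))).
  by apply: funext => G; rewrite !mxE sumrB mulr_sumr.
apply: continuous_big.
- exact: (@add_continuous C^o).
- move=> k _ G.
  have entry := @coord_continuous C n n.
  apply: (@continuousB _ _ _ (fun G : M => G i k * X k j) (fun G => c * (X i k * G k j))).
  + exact: (continuousM (entry i k G) (@cst_continuous _ _ (X k j) G)).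
  + exact: (continuousM (@cst_continuous _ _ c G)
      (continuousM (@cst_continuous _ _ (X i k) G) (entry k j G))).
Qed.

Lemma twisted_cent_closed (X : M) (c : C) : closed (twisted_cent X c).
Proof.
rewrite -openC.
suff : closed (@pgl_pi R n @^-1` twisted_cent X c) by rewrite -openC.
have -> : @pgl_pi R n @^-1` twisted_cent X c =
    \bigcap_i \bigcap_j ((fun G : M => (G *m X - c *: (X *m G)) i j) @^-1` [set 0]).
  rewrite predeqE => G /=; rewrite twisted_cent_pi.
  split=> [E i _ j _ | E]; first by rewrite /= E subrr mxE.
  apply/eqP; rewrite -subr_eq0; apply/eqP/matrixP => i j.
  by rewrite (E i I j I) mxE.
apply: closed_bigI => i _; apply: closed_bigI => j _.
apply: preimage_closed => [G _|]; first exact: twisted_coef_continuous.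
exact: (accessible_closed_set1 (hausdorff_accessible (@norm_hausdorff C C^o))).
Qed.

End TwistedCentralizer.

Section TwistedCentralizerUnits.
Variables (R : realType) (n : nat).
Local Notation C := (CC R).
Local Notation M := 'M[C]_n.+1.
Local Notation PG := (PGLq R n.+1).
Local Notation one := (pgl_one R n.+1).

Lemma unitmx_neq0 (B : M) : B \in unitmx -> B != 0.
Proof. by apply: contraTneq => ->; rewrite unitmxE det0 unitr0. Qed.

Lemma pgl_exp_pi (x : PG) (k : nat) : pgl_exp x k = pgl_pi (repr x ^+ k).
Proof.
elim: k => [//|k IH] /=.
by rewrite IH -{1}[x]repr_pglK pgl_mul_pi exprS mulmxE.
Qed.

Lemma twisted_cent_uniq (X : M) (y : PG) (c d : C) : X \in unitmx -> PGL y ->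
  twisted_cent X c y -> twisted_cent X d y -> c = d.
Proof.
move=> Xu yu Yc Yd; have /eqP : c *: (X *m repr y) = d *: (X *m repr y) by rewrite -Yc -Yd.
rewrite -subr_eq0 -scalerBl scalemx_eq0 subr_eq0 (negbTE (unitmx_neq0 _)) ?orbF.
  by move/eqP.
by rewrite unitmx_mul Xu.
Qed.

Lemma twisted_cent_root (x y : PG) (p : nat) : PGL y -> pgl_exp x p = one ->
  pgl_mul y x = pgl_mul x y -> exists2 c : C, c ^+ p = 1 & twisted_cent (repr x) c y.
Proof.
move=> yu xp /pgl_piP[c c0 E]; set X := repr x in E *; set Y := repr y in yu E *.
have YX : Y *m X = c^-1 *: (X *m Y) by rewrite E scalerA mulVf // scale1r.
have YXk k : Y *m X ^+ k = c^-1 ^+ k *: (X ^+ k *m Y).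
  elim: k => [|k IH]; first by rewrite !expr0 mulmx1 mul1mx scale1r.
  rewrite !exprS -!mulmxE mulmxA YX -scalemxAl -mulmxA IH -scalemxAr scalerA.
  by rewrite mulmxA.
exists c^-1 => //.
have [l l0 Xp] : exists2 l : C, l != 0 & X ^+ p = l%:M.
  move: xp; rewrite pgl_exp_pi => /pgl_piP[l l0 E1]; exists l^-1; first by rewrite invr_eq0.
  by rewrite -scalemx1 E1 scalerA mulVf // scale1r.
move: (YXk p); rewrite Xp mul_mx_scalar mul_scalar_mx scalerA => /eqP.
rewrite -subr_eq0 -scalerBl scalemx_eq0 (negbTE (unitmx_neq0 yu)) orbF subr_eq0.
by rewrite -{1}[l]mul1r => /eqP/(mulIf l0) <-.
Qed.

Lemma connected_sub_twisted_cent1 (S : set PG) (X : M) (p : nat) (z : C) :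
  p.-primitive_root z -> X \in unitmx -> S `<=` @PGL R n.+1 -> connected S -> S one ->
  (forall y, S y -> exists2 c : C, c ^+ p = 1 & twisted_cent X c y) ->
  S `<=` twisted_cent X 1.
Proof.
(* The twists are p-th roots of unity z^k, so S is partitioned by the closed sets
   twisted_cent X (z ^+ k), k < p, and the piece k = 0 is clopen in S. *)
move=> z_prim Xu S_PGL S_conn S1 S_root.
pose O := \bigcup_(k in [set k : 'I_p | (0 < k)%N]) twisted_cent X (z ^+ k).
have O_closed : closed O.
  by apply: closed_bigcup => [|k _]; [exact: finite_finset | exact: twisted_cent_closed].
have S_cent1 : S `&` twisted_cent X 1 = S `&` ~` O.
  apply/seteqP; split=> y [Sy Yy]; split=> //.
    move=> [k /= k_gt0 /(twisted_cent_uniq Xu (S_PGL _ Sy) Yy) /esym/eqP].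
    by rewrite -(prim_order_dvd z_prim) gtnNdvd.
  have [c cp Yc] := S_root y Sy; have [k c_eq] := prim_rootP z_prim cp.
  have [k0 | k_gt0] := posnP k; first by rewrite c_eq k0 expr0 in Yc.
  by exfalso; apply: Yy; exists k => //; rewrite -c_eq.
have one_cent1 : twisted_cent X 1 one.
  by rewrite /pgl_one twisted_cent_pi mul1mx mulmx1 scale1r.
rewrite -[X in X `<=` _](S_conn (S `&` twisted_cent X 1)) => [y [] //| | |].
- by exists one.
- by exists (~` O); rewrite ?openC.
- by exists (twisted_cent X 1) => //; exact: twisted_cent_closed.
Qed.

End TwistedCentralizerUnits.

Section ConnectedCentralizer.
Variables (R : realType) (n p : nat) (A : set (PGLq R n.+1)).
Local Notation PG := (PGLq R n.+1).
Local Notation one := (pgl_one R n.+1).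

Lemma centralizer_one : centralizer A one.
Proof. by split=> [|x _]; [exact/PGL_pi/unitmx1 | rewrite pgl_mul1x pgl_mulx1]. Qed.

Hypotheses (pp : prime p) (p_gt2 : (2 < p)%N) (cent_conn : connected (centralizer A)).

Lemma connected_centralizer_commute (x : PG) : A x -> PGL x -> pgl_exp x p = one ->
  centralizer A `<=` twisted_cent (repr x) 1.
Proof.
move=> Ax xu xp; apply: (connected_sub_twisted_cent1 (@alpha_prim_root R p p_gt2 pp)) => //.
- by move=> y [].
- exact: centralizer_one.
- by move=> y [yu y_comm]; apply: twisted_cent_root => //; rewrite y_comm.
Qed.

End ConnectedCentralizer.

Section TracelessToralSubgroup.
Variables (R : realType) (n p : nat) (g : 'M[CC R]_n.+1) (A : set (PGLq R n.+1)).
Local Notation PG := (PGLq R n.+1).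
Local Notation one := (pgl_one R n.+1).
Hypotheses (pp : prime p) (p_gt2 : (2 < p)%N).
Hypotheses (g_unit : g \in unitmx) (A_torus : A `<=` max_torus g).
Hypotheses (A_PGL : A `<=` @PGL R n.+1) (A_one : A one)
  (A_mul : forall x y, A x -> A y -> A (pgl_mul x y))
  (A_inv : forall x, A x -> A (pgl_inv x)) (A_fin : finite_set A)
  (A_exp : forall x, A x -> pgl_exp x p = one).
Hypothesis A_traceless : forall x, A x -> x <> one -> \tr (repr x) = 0.

Lemma traceless_toral_centralizer_disconnected (x1 : PG) :
  A x1 -> x1 <> one -> ~ connected (centralizer A).
Proof.
move=> Ax1 x1_nt cent_conn.
have [i1 w_nt] : exists i1, weight g x1 i1 ord0 != 1.
  apply: contrapT => all_w1; apply: x1_nt.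
  apply: (weights1_pgl_one g_unit (i0 := ord0) (A_torus Ax1)) => i.
  by apply: contrapT => w_nt; apply: all_w1; exists i; apply/eqP.
pose psi x := weight g x i1 ord0.
have psi_char := weight_character g_unit A_torus i1 ord0.
have [s s_weight] := exists_weight_perm g_unit A_torus A_PGL A_one A_mul A_inv A_fin
  A_traceless psi_char.
pose G := g *m perm_mx s *m invmx g.
have G_scomm x : A x -> G *m repr x = psi x *: (repr x *m G).
  by move=> Ax; exact: (perm_mx_conj_scommute g_unit (A_torus Ax) (fun i => s_weight i x Ax)).
have G_PGL : PGL (pgl_pi G).
  by apply: PGL_pi; rewrite !unitmx_mul g_unit unitmx_perm unitmx_inv.
have cent_G : centralizer A (pgl_pi G).
  split=> // x Ax; rewrite -[x]repr_pglK !pgl_mul_pi G_scomm // pgl_piZ //.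
  by case: psi_char => psi0 _; exact: psi0.
have G_comm1 := connected_centralizer_commute pp p_gt2 cent_conn Ax1 (A_PGL Ax1)
  (A_exp Ax1) cent_G.
have G_twist : twisted_cent (repr x1) (psi x1) (pgl_pi G) by apply/twisted_cent_pi/G_scomm.
by move: w_nt; rewrite -/(psi x1) -(twisted_cent_uniq (A_PGL Ax1) G_PGL G_comm1 G_twist) eqxx.
Qed.

End TracelessToralSubgroup.

Lemma card_ord_exists_neq (T : Type) (A : set T) (a : T) (N : nat) :
  (A #= [set: 'I_N])%card -> (1 < N)%N -> A a -> exists2 x, A x & x <> a.
Proof.
move=> A_card N_gt1 Aa; apply: contrapT => no_other.
have A1 : A = [set a].
  apply/seteqP; split=> [x Ax | x -> //]; apply: contrapT => xa.
  by apply: no_other; exists x.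
have /card_eq_II N1 : (`I_1 #= `I_N)%card.
  rewrite A1 in A_card.
  exact: card_eq_trans (card_esym card_set1) (card_eq_trans A_card (card_esym card_II)).
by rewrite -N1 in N_gt1.
Qed.

Theorem corollary4p30 (R : realType) (n p s r : nat) (A : set (PGLq R n)) :
  prime p -> odd p ->
  (p ^ s %| n)%N -> ~~ (p ^ s.+1 %| n)%N -> (1 <= s)%N ->
  (1 <= r)%N -> (r <= s)%N ->
  elem_abelian_psubgroup p r A -> toral A ->
  connected (centralizer A) ->
  exists2 x, A x & pgl_has_order x p /\ ~ pgl_conjugate x (@e_elt R n p).
Proof.
(* From the divisibility hypotheses only p %| n and n > 0 are needed; r <= s is unused. *)
case: n A => [|n] A pp p_odd ps_dvd_n ps1_ndvd_n s_gt0 r_gt0 _.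
  by rewrite dvdn0 in ps1_ndvd_n.
move=> [[A_PGL A_one A_mul A_inv] [_ A_exp A_card]] [g g_unit A_torus] cent_conn.
have p_gt2 : (2 < p)%N.
  by rewrite ltn_neqAle prime_gt1 // andbT; apply: (contraTneq _ p_odd) => <-.
have p_dvd_n : (p %| n.+1)%N := dvdn_trans (dvdn_exp s_gt0 (dvdnn p)) ps_dvd_n.
apply: contrapT => no_witness.
have A_traceless x : A x -> x <> pgl_one R n.+1 -> \tr (repr x) = 0.
  move=> Ax x_nt; apply: (pgl_conjugate_e_mxtrace pp p_gt2 p_dvd_n) => //.
  apply: contrapT => x_nconj; apply: no_witness; exists x => //.
  by split=> //; exact: pgl_has_order_prime pp (A_exp x Ax) x_nt.
have A_fin : finite_set A by rewrite (eq_finite_set A_card); exact: finite_finset.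
have pr_gt1 : (1 < p ^ r)%N by rewrite -{1}(expn0 p) ltn_exp2l ?prime_gt1.
have [x1 Ax1 x1_nt] := card_ord_exists_neq A_card pr_gt1 A_one.
exact: (traceless_toral_centralizer_disconnected pp p_gt2 g_unit A_torus A_PGL A_one
  A_mul A_inv A_fin A_exp A_traceless Ax1 x1_nt).
Qed.
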